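(* In the standing setup, let $\alpha=(\alpha_n)$ be a subsequence of $(p_n)$ with $\sum_{n=0}^\infty \ell_n^\alpha<+\infty$, let $\beta_n=\alpha_0\cdots\alpha_n$ and $r_n=B_\infty(\beta_n^{-1}i,\,i)$. Then $(r_n)_n$ converges to a real number $r_\alpha$, and $|r_n|\le\sum_{i=0}^\infty\ell_i^\alpha$ for all $n\ge0$; hence $|r_\alpha|\le\sum_{i=0}^\infty\ell_i^\alpha$.
   Context: Standing setup: $\mathbb H$ is the upper half-plane with distance $d$, $\partial\mathbb H=\mathbb R\cup\{\infty\}$; for $v\in T^1\mathbb H$, $v(t)$ is the unit-speed geodesic with initial vector $v$, $v(+\infty)$ its forward endpoint. Busemann function: $B_\xi(x,y)=\lim_{t\to\infty}(d(x,c(t))-d(y,c(t)))$ for a geodesic ray $c$ converging to $\xi$. For a horocycle $\tilde H$ and a parabolic isometry $p$ preserving it, $\ell(\tilde H,p)$ is the horocyclic arc length between $x$ and $px$ ($x\in\tilde H$); positive orientation is that of an arc-length parametrization with $p\tilde H(s)=\tilde H(s+\ell(\tilde H,p))$; $\tilde u$ is tangent to the oriented pair $(\tilde H,p)$ if $\tilde u(\mathbb R^+)$ is tangent to $\tilde H$ at $\tilde u(t_0)=\tilde H(s_0)$, $t_0\ge0$, with $\frac{d\tilde u}{dt}(t_0)=\frac{d\tilde H}{ds}(s_0)$ for a positively oriented parametrization. $\Gamma$ is a torsion-free Fuchsian group, $S=\Gamma\backslash\mathbb H$ has at least one cusp, $u\in T^1S$ is cusp-recurrent with lift $\tilde u$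 normalized so that $\tilde u(0)=i$, $\tilde u(+\infty)=\infty$. $(\tilde H_n,p_n)_{n\in\mathbb N}$: $p_n\in\Gamma$ parabolic with fixed point $x_n\in\mathbb R$, $\tilde H_n$ horocycle centered at $x_n$, $\tilde u$ tangent to the oriented pair $(\tilde H_n,p_n)$ at $\tilde u(t_n)$, $(t_n)$ nonnegative increasing to $+\infty$, $x_n$ positive distinct increasing to $+\infty$, horoballs bounded by the $\tilde H_n$ pairwise disjoint, $\ell(\tilde H_n,p_n)\to0$. A subsequence $\alpha$ is $\alpha_n=p_{k_n}$ ($k_n$ increasing), $\ell_n^\alpha=\ell(\tilde H_{k_n},p_{k_n})$. *)

From Stdlib Require Import Reals Lra.
From Coquelicot Require Import Coquelicot.
Open Scope R_scope.

(** * Upper half-plane model.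
    A point of H is a pair (x, y) : R * R, standing for x + i y, with y > 0. *)
Definition pt := (R * R)%type.
Definition inH (z : pt) : Prop := 0 < snd z.
Definition i_pt : pt := (0, 1).

Definition arcosh (u : R) : R := ln (u + sqrt (u ^ 2 - 1)).

Definition hdist (z w : pt) : R :=
  arcosh (1 + ((fst z - fst w) ^ 2 + (snd z - snd w) ^ 2) / (2 * snd z * snd w)).

(** The geodesic ray t |-> i e^t, converging to the boundary point infinity.
    This is also the normalized lift  u~  of u : u~(0) = i, u~(+oo) = oo. *)
Definition ray_inf (t : R) : pt := (0, exp t).

Definition busemann_inf (x y : pt) : R :=
  real (Lim (fun t => hdist x (ray_inf t) - hdist y (ray_inf t)) p_infty).

Record mat := Mat { ma : R; mb : R; mc : R; md : R }.
Definition mdet (g : mat) : R := ma g * md g - mb g * mc g.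
Definition mI : mat := Mat 1 0 0 1.
Definition mneg (g : mat) : mat := Mat (- ma g) (- mb g) (- mc g) (- md g).
Definition mmul (g h : mat) : mat :=
  Mat (ma g * ma h + mb g * mc h) (ma g * mb h + mb g * md h)
      (mc g * ma h + md g * mc h) (mc g * mb h + md g * md h).
(** inverse in SL(2,R) (adjugate) *)
Definition minv (g : mat) : mat := Mat (md g) (- mb g) (- mc g) (ma g).
Fixpoint mpow (g : mat) (n : nat) : mat :=
  match n with O => mI | S n => mmul g (mpow g n) end.
Definition mtrace (g : mat) : R := ma g + md g.
Definition mdist (g h : mat) : R :=
  Rabs (ma g - ma h) + Rabs (mb g - mb h) + Rabs (mc g - mc h) + Rabs (md g - md h).

(** Moebius action z |-> (a z + b) / (c z + d) on the upper half-plane. *)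
Definition mob (g : mat) (z : pt) : pt :=
  let x := fst z in let y := snd z in
  let den := (mc g * x + md g) ^ 2 + (mc g * y) ^ 2 in
  (((ma g * x + mb g) * (mc g * x + md g) + ma g * mc g * y ^ 2) / den,
   mdet g * y / den).

(** g (as an isometry of H, extended to the boundary) fixes the real point x:
    (a x + b)/(c x + d) = x. *)
Definition fixes_real (g : mat) (x : R) : Prop :=
  mc g * x ^ 2 + (md g - ma g) * x - mb g = 0.

(** Parabolic isometry: non-trivial in PSL(2,R), with |trace| = 2. *)
Definition parabolic (g : mat) : Prop :=
  mdet g = 1 /\ Rabs (mtrace g) = 2 /\ g <> mI /\ g <> mneg mI.

(** Torsion-free Fuchsian group, given by its (discrete) preimage in SL(2,R). *)
Definition fuchsian (G : mat -> Prop) : Prop :=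
  (forall g, G g -> mdet g = 1) /\
  G mI /\
  (forall g h, G g -> G h -> G (mmul g h)) /\
  (forall g, G g -> G (minv g)) /\
  (exists eps, 0 < eps /\ forall g, G g -> mdist g mI < eps -> g = mI).

Definition torsion_free (G : mat -> Prop) : Prop :=
  forall g n, G g -> (1 <= n)%nat ->
    (mpow g n = mI \/ mpow g n = mneg mI) -> (g = mI \/ g = mneg mI).

(** * Horocycles centred at a real point.
    The horocycle centred at x in R of Euclidean radius r > 0 is the Euclidean
    circle of centre (x, r) and radius r (tangent to R at x), minus x. *)
Definition on_horo (x r : R) (z : pt) : Prop :=
  inH z /\ (fst z - x) ^ 2 + (snd z - r) ^ 2 = r ^ 2.
Definition in_horoball (x r : R) (z : pt) : Prop :=
  inH z /\ (fst z - x) ^ 2 + (snd z - r) ^ 2 < r ^ 2.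

Definition arclength_param (x r : R) (gam : R -> pt) (v1 v2 : R -> R) : Prop :=
  (forall s, on_horo x r (gam s)) /\
  (forall z, on_horo x r z -> exists s, gam s = z) /\
  (forall s s', gam s = gam s' -> s = s') /\
  (forall s, is_derive (fun u => fst (gam u)) s (v1 s)) /\
  (forall s, is_derive (fun u => snd (gam u)) s (v2 s)) /\
  (forall s, sqrt (v1 s ^ 2 + v2 s ^ 2) / snd (gam s) = 1).

(** Positively oriented arc-length parametrization of the oriented pair (H, p),
    with l = l(H, p) the horocyclic length between z and p z:
    p H(s) = H(s + l). *)
Definition pos_param (x r : R) (p : mat) (l : R) (gam : R -> pt) (v1 v2 : R -> R)
  : Prop :=
  arclength_param x r gam v1 v2 /\ 0 <= l /\ forall s, mob p (gam s) = gam (s + l).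

Definition horo_length (x r : R) (p : mat) (l : R) : Prop :=
  exists gam v1 v2, pos_param x r p l gam v1 v2.

(** Note du~/dt (t) = (0, e^t). *)
Definition tangent_to_pair (x r : R) (p : mat) (t0 : R) : Prop :=
  0 <= t0 /\
  exists l gam v1 v2 s0, pos_param x r p l gam v1 v2 /\
    gam s0 = ray_inf t0 /\ v1 s0 = 0 /\ v2 s0 = exp t0.

Fixpoint prod_upto (f : nat -> mat) (n : nat) : mat :=
  match n with
  | O => f O
  | S m => mmul (prod_upto f m) (f (S m))
  end.

From Stdlib Require Import Reals Lra Lia.
From Coquelicot Require Import Coquelicot.
Open Scope R_scope.

(* Since B_oo(z, i) = - ln (Im z), r_n is the height - ln (Im z_n) of
   z_n = beta_n^-1 i, and z_(n+1) = alpha_(n+1)^-1 z_n.  Tangency of the ray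
   i e^t to the horocycle of alpha_n forces that horocycle to have Euclidean
   radius x_n = e^(t_n) >= 1 and fixes its orientation, so that
   alpha_n = +- [[1 + l/2, - x l/2], [l/(2x), 1 - l/2]] with x = x_n, l = l_n.
   The quarter disk {Re z >= 0, |z| <= x} is mapped into itself by such an
   alpha^-1, which divides Im z by a factor in [1, 1 + l + l^2/2], a subset of
   [1, e^l].  As x_n increases, every z_n stays in the quarter disk of radius
   x_(n+1), so (r_n) is nondecreasing with increments at most l_n: it
   converges, and all its terms and its limit lie in [0, sum l_n]. *)

(** * Moebius action *)

Lemma mob_den_pos (g : mat) (X Y : R) : mdet g <> 0 -> 0 < Y ->
  0 < (mc g * X + md g) ^ 2 + (mc g * Y) ^ 2.
Proof.
  destruct g as [a b c d]; unfold mdet; cbn; intros Hdet HY.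
  destruct (Req_dec c 0) as [-> | Hc].
  - assert (d <> 0) by (intros ->; apply Hdet; ring). nra.
  - assert (0 < (c * Y) ^ 2) by (apply pow2_gt_0, Rmult_integral_contrapositive; split; lra).
    pose proof (pow2_ge_0 (c * X + d)); lra.
Qed.

Lemma mob_im_pos (g : mat) (z : pt) : mdet g = 1 -> inH z -> inH (mob g z).
Proof.
  unfold inH, mob; cbn; intros Hdet Hz; rewrite Hdet.
  apply Rdiv_lt_0_compat; [lra | apply mob_den_pos; lra].
Qed.

Lemma mdet_mmul (g h : mat) : mdet (mmul g h) = mdet g * mdet h.
Proof. destruct g, h; unfold mdet, mmul; cbn; ring. Qed.

Lemma mdet_minv (g : mat) : mdet (minv g) = mdet g.
Proof. destruct g; unfold mdet, minv; cbn; ring. Qed.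

Lemma mdet_mneg (g : mat) : mdet (mneg g) = mdet g.
Proof. destruct g; unfold mdet, mneg; cbn; ring. Qed.

Lemma minv_mmul (g h : mat) : minv (mmul g h) = mmul (minv h) (minv g).
Proof. destruct g, h; unfold minv, mmul; cbn; f_equal; ring. Qed.

Lemma mob_mneg (g : mat) (z : pt) : mob (mneg g) z = mob g z.
Proof. destruct g, z; unfold mob, mneg, mdet; cbn; f_equal; f_equal; ring. Qed.

Lemma mob_mmul (g h : mat) (z : pt) : mdet g = 1 -> mdet h = 1 -> inH z ->
  mob (mmul g h) z = mob g (mob h z).
Proof.
  intros Hg Hh Hz.
  pose proof (mob_den_pos h (fst z) (snd z) ltac:(lra) Hz) as Dh.
  assert (Hgh : mdet (mmul g h) <> 0) by (rewrite mdet_mmul, Hg, Hh; lra).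
  pose proof (mob_den_pos (mmul g h) (fst z) (snd z) Hgh Hz) as Dgh.
  destruct g as [a b c d], h as [a' b' c' d'], z as [X Y].
  unfold mob, mdet, mmul, inH in *; cbn [fst snd ma mb mc md] in *.
  f_equal; field; repeat split; apply Rgt_not_eq; nra.
Qed.

Lemma mdet_prod_upto (f : nat -> mat) : (forall n, mdet (f n) = 1) ->
  forall n, mdet (prod_upto f n) = 1.
Proof.
  intros Hf n; induction n as [|n IH]; cbn [prod_upto]; [apply Hf|].
  rewrite mdet_mmul, IH, Hf; ring.
Qed.

Lemma mob_minv_prod_upto (f : nat -> mat) (z : pt) (n : nat) :
  (forall m, mdet (f m) = 1) -> inH z ->
  mob (minv (prod_upto f (S n))) z = mob (minv (f (S n))) (mob (minv (prod_upto f n)) z).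
Proof.
  intros Hf Hz; cbn [prod_upto]; rewrite minv_mmul.
  apply mob_mmul; rewrite ?mdet_minv; auto using mdet_prod_upto.
Qed.

(** * Parabolic normal form *)

(* The parabolic fixing [x] that translates by hyperbolic length [l] along the
   horocycle at [x] of Euclidean radius [x] (the one through [i x]). *)
Definition parabolic_at (x l : R) : mat :=
  Mat (1 + l / 2) (- (x * l / 2)) (l / (2 * x)) (1 - l / 2).

Lemma mdet_parabolic_at (x l : R) : x <> 0 -> mdet (parabolic_at x l) = 1.
Proof. intros Hx; unfold mdet, parabolic_at; cbn [ma mb mc md]; field; exact Hx. Qed.

Lemma minv_parabolic_at (x l : R) : minv (parabolic_at x l) = parabolic_at x (- l).
Proof. unfold minv, parabolic_at; cbn [ma mb mc md]; f_equal; unfold Rdiv; ring. Qed.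

Lemma parabolic_fixing_real (p : mat) (x : R) : parabolic p -> fixes_real p x -> x <> 0 ->
  exists l, p = parabolic_at x l \/ p = mneg (parabolic_at x l).
Proof.
  intros [Hdet [Htr _]] Hfix Hx. destruct p as [a b c d].
  unfold mdet, mtrace, fixes_real, parabolic_at, mneg in *; cbn [ma mb mc md] in *.
  assert (Hb : b = c * x ^ 2 + (d - a) * x) by lra.
  assert (Hsign : a + d = 2 \/ a + d = -2).
  { destruct (Rle_or_lt 0 (a + d)).
    - rewrite Rabs_right in Htr by lra. lra.
    - rewrite Rabs_left in Htr by lra. lra. }
  (* with a = e + u, d = e - u (e = +-1), the determinant gives (u - c x)^2 = 0 *)
  assert (Hu : a - d = 2 * c * x).
  { subst b. destruct Hsign as [Hs | Hs]; replace d with ((a + d) - a) in Hdet by ring;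
      rewrite Hs in Hdet; nra. }
  destruct Hsign as [Hs | Hs].
  - exists (2 * c * x). left. f_equal; field_simplify_eq; try lra; nra.
  - exists (- (2 * c * x)). right. f_equal; field_simplify_eq; try lra; nra.
Qed.

(** * The Busemann function at infinity *)

(* With e = exp (- t), cosh d ((X, Y), i e^t) = scaled_cosh_dist X Y e / e, so
   d ((X, Y), i e^t) - t = dist_excess X Y e extends continuously to e = 0. *)
Definition scaled_cosh_dist (X Y e : R) : R := (X ^ 2 + Y ^ 2) / (2 * Y) * e ^ 2 + / (2 * Y).
Definition dist_excess (X Y e : R) : R :=
  ln (scaled_cosh_dist X Y e + sqrt (scaled_cosh_dist X Y e ^ 2 - e ^ 2)).

Lemma scaled_cosh_dist_pos (X Y e : R) : 0 < Y -> 0 < scaled_cosh_dist X Y e.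
Proof.
  intros HY; unfold scaled_cosh_dist.
  assert (0 < / (2 * Y)) by (apply Rinv_0_lt_compat; lra).
  assert (0 <= (X ^ 2 + Y ^ 2) / (2 * Y) * e ^ 2)
    by (apply Rmult_le_pos; [apply Rdiv_le_0_compat; nra | apply pow2_ge_0]).
  lra.
Qed.

Lemma scaled_cosh_dist_ge (X Y e : R) : 0 < Y -> 0 < e -> e <= scaled_cosh_dist X Y e.
Proof.
  intros HY He; unfold scaled_cosh_dist.
  apply (Rmult_le_reg_l (2 * Y)); [lra|].
  replace (2 * Y * ((X ^ 2 + Y ^ 2) / (2 * Y) * e ^ 2 + / (2 * Y)))
    with ((X ^ 2 + Y ^ 2) * e ^ 2 + 1) by (field; lra).
  pose proof (pow2_ge_0 (Y * e - 1)); pose proof (pow2_ge_0 (X * e)); nra.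
Qed.

Lemma hdist_ray_inf (X Y t : R) : 0 < Y ->
  hdist (X, Y) (ray_inf t) = t + dist_excess X Y (exp (- t)).
Proof.
  intros HY; unfold hdist, arcosh, ray_inf, dist_excess; cbn [fst snd].
  set (e := exp (- t)); assert (He : 0 < e) by apply exp_pos.
  assert (Ht : exp t = / e) by (unfold e; rewrite exp_Ropp; field; apply Rgt_not_eq, exp_pos).
  pose proof (scaled_cosh_dist_ge X Y e HY He) as HPe.
  set (P := scaled_cosh_dist X Y e) in HPe |- *.
  replace (1 + ((X - 0) ^ 2 + (Y - exp t) ^ 2) / (2 * Y * exp t)) with (P / e)
    by (rewrite Ht; unfold P, scaled_cosh_dist; field; lra).
  replace ((P / e) ^ 2 - 1) with ((P ^ 2 - e ^ 2) / (e * e)) by (field; lra).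
  rewrite sqrt_div, sqrt_square by nra.
  replace (P / e + sqrt (P ^ 2 - e ^ 2) / e) with ((P + sqrt (P ^ 2 - e ^ 2)) / e) by (field; lra).
  pose proof (sqrt_pos (P ^ 2 - e ^ 2)).
  rewrite ln_div by lra. unfold e; rewrite ln_exp; ring.
Qed.

Lemma dist_excess_0 (X Y : R) : 0 < Y -> dist_excess X Y 0 = - ln Y.
Proof.
  intros HY; unfold dist_excess, scaled_cosh_dist.
  assert (0 < / (2 * Y)) by (apply Rinv_0_lt_compat; lra).
  replace ((X ^ 2 + Y ^ 2) / (2 * Y) * 0 ^ 2 + / (2 * Y)) with (/ (2 * Y)) by ring.
  replace ((/ (2 * Y)) ^ 2 - 0 ^ 2) with (/ (2 * Y) * / (2 * Y)) by ring.
  rewrite sqrt_square by lra.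
  replace (/ (2 * Y) + / (2 * Y)) with (/ Y) by (field; lra).
  apply ln_Rinv; lra.
Qed.

Lemma dist_excess_continuous_0 (X Y : R) : 0 < Y -> continuity_pt (dist_excess X Y) 0.
Proof.
  intros HY.
  set (P := scaled_cosh_dist X Y).
  assert (HP : forall e, continuity_pt P e) by (intros e; unfold P, scaled_cosh_dist; reg).
  assert (HQ : continuity_pt (fun e => P e ^ 2 - e ^ 2) 0).
  { apply continuity_pt_minus; [|reg].
    apply (continuity_pt_comp P (fun u => u ^ 2)); [apply HP | reg]. }
  assert (HP0 : 0 < P 0) by apply scaled_cosh_dist_pos, HY.
  assert (HQ0 : 0 < P 0 ^ 2 - 0 ^ 2) by nra.
  apply (continuity_pt_comp (fun e => P e + sqrt (P e ^ 2 - e ^ 2)) ln).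
  - apply continuity_pt_plus; [apply HP|].
    apply (continuity_pt_comp (fun e => P e ^ 2 - e ^ 2) sqrt);
      [exact HQ | apply sqrt_continuity_pt; lra].
  - apply derivable_continuous_pt. pose proof (sqrt_pos (P 0 ^ 2 - 0 ^ 2)).
    exists (/ (P 0 + sqrt (P 0 ^ 2 - 0 ^ 2))). apply derivable_pt_lim_ln. lra.
Qed.

Lemma busemann_inf_i (z : pt) : inH z -> busemann_inf z i_pt = - ln (snd z).
Proof.
  destruct z as [X Y]; unfold inH; cbn [snd]; intros HY.
  assert (Hexp : is_lim (fun t => exp (- t)) p_infty 0).
  { apply (is_lim_comp exp Ropp p_infty 0 m_infty); [apply is_lim_exp_m | |].
    - apply (is_lim_opp id p_infty p_infty), is_lim_id.
    - exists 0; intros y _; discriminate. }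
  assert (Hlim : is_lim (fun t => hdist (X, Y) (ray_inf t) - hdist i_pt (ray_inf t))
                   p_infty (- ln Y)).
  { apply (is_lim_ext (fun t => dist_excess X Y (exp (- t)) - dist_excess 0 1 (exp (- t)))).
    { intros t; unfold i_pt; rewrite !hdist_ray_inf by lra; ring. }
    replace (- ln Y) with (dist_excess X Y 0 - dist_excess 0 1 0)
      by (rewrite !dist_excess_0, ln_1 by lra; ring).
    apply (is_lim_minus _ _ p_infty (dist_excess X Y 0) (dist_excess 0 1 0)); [| | reflexivity];
      (eapply filterlim_comp;
       [apply Hexp | apply continuity_pt_filterlim, dist_excess_continuous_0; lra]). }
  unfold busemann_inf; rewrite (is_lim_unique _ _ _ Hlim); reflexivity.
Qed.

(** * Real analysis *)

Lemma derivable_pt_lim_sign (f : R -> R) (m l : R) : derivable_pt_lim f m l -> l <> 0 ->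
  exists del, 0 < del /\ forall h, h <> 0 -> Rabs h < del -> 0 < (f (m + h) - f m) * h * l.
Proof.
  intros Hf Hl.
  assert (Hl2 : 0 < Rabs l / 2) by (pose proof (Rabs_pos_lt l Hl); lra).
  destruct (Hf _ Hl2) as [del Hdel].
  exists del; split; [apply cond_pos|]. intros h Hh Hhd.
  set (q := (f (m + h) - f m) / h).
  assert (Hq : Rabs (q - l) < Rabs l / 2) by (apply Hdel; assumption).
  assert (Hql : 0 < q * l).
  { apply Rabs_def2 in Hq. destruct (Rle_or_lt 0 l).
    - rewrite Rabs_right in Hq by lra. nra.
    - rewrite Rabs_left in Hq by lra. nra. }
  replace ((f (m + h) - f m) * h * l) with (q * l * (h * h)) by (unfold q; field; exact Hh).
  apply Rmult_lt_0_compat; [exact Hql | nra].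
Qed.

Lemma darboux_zero (f df : R -> R) (a b : R) :
  (forall s, derivable_pt_lim f s (df s)) -> a < b -> df a < 0 -> 0 < df b ->
  exists c, a < c < b /\ df c = 0.
Proof.
  intros Hf Hab Ha Hb.
  assert (Hcont : forall c, continuity_pt f c)
    by (intros c; apply derivable_continuous_pt; exists (df c); apply Hf).
  destruct (continuity_ab_min f a b ltac:(lra) (fun c _ => Hcont c)) as [m [Hmin Hm]].
  assert (Hma : m <> a).
  { intros ->. destruct (derivable_pt_lim_sign f a (df a) (Hf a) ltac:(lra)) as [del [Hdel Hsgn]].
    set (h := Rmin del (b - a) / 2).
    assert (0 < h < Rmin del (b - a)) by (unfold h; pose proof (Rmin_glb_lt del (b - a) 0); lra).
    pose proof (Rmin_l del (b - a)); pose proof (Rmin_r del (b - a)).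
    specialize (Hsgn h ltac:(lra) ltac:(rewrite Rabs_right; lra)).
    specialize (Hmin (a + h) ltac:(lra)).
    assert (0 <= (f (a + h) - f a) * h) by (apply Rmult_le_pos; lra). nra. }
  assert (Hmb : m <> b).
  { intros ->. destruct (derivable_pt_lim_sign f b (df b) (Hf b) ltac:(lra)) as [del [Hdel Hsgn]].
    set (h := Rmin del (b - a) / 2).
    assert (0 < h < Rmin del (b - a)) by (unfold h; pose proof (Rmin_glb_lt del (b - a) 0); lra).
    pose proof (Rmin_l del (b - a)); pose proof (Rmin_r del (b - a)).
    specialize (Hsgn (- h) ltac:(lra) ltac:(rewrite Rabs_left; lra)).
    specialize (Hmin (b + - h) ltac:(lra)).
    assert (0 <= (f (b + - h) - f b) * h) by (apply Rmult_le_pos; lra). nra. }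
  exists m; split; [lra|].
  rewrite <- (derive_pt_eq_0 f m (df m) (exist _ (df m) (Hf m)) (Hf m)).
  apply (deriv_minimum f a b); try lra. intros s Hs1 Hs2; apply Hmin; lra.
Qed.

Lemma increment_of_derivative_pm (f df : R -> R) (c a b : R) :
  (forall s, is_derive f s (df s)) -> (forall s, df s = c \/ df s = - c) -> a <= b ->
  f b - f a = c * (b - a) \/ f b - f a = - c * (b - a).
Proof.
  intros Hf Hdf Hab.
  destruct (MVT_gen f a b df) as [s [_ Hs]].
  - intros s _; apply Hf.
  - intros s _. apply derivable_continuous_pt. exists (df s). apply is_derive_Reals, Hf.
  - destruct (Hdf s) as [E | E]; rewrite E in Hs; [left | right]; exact Hs.
Qed.

Lemma increment_of_derivative_pm_start (f df : R -> R) (c a b : R) :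
  (forall s, is_derive f s (df s)) -> (forall s, df s = c \/ df s = - c) -> 0 < c ->
  df a = - c -> a <= b -> f b - f a = - c * (b - a).
Proof.
  intros Hf Hdf Hc Ha Hab.
  assert (Hf' : forall s, derivable_pt_lim f s (df s)) by (intros s; apply is_derive_Reals, Hf).
  destruct (MVT_gen f a b df) as [s [Hs E]].
  - intros s _; apply Hf.
  - intros s _. apply derivable_continuous_pt. exists (df s). apply Hf'.
  - rewrite Rmin_left, Rmax_right in Hs by lra.
    destruct (Hdf s) as [Hsc | Hsc]; rewrite Hsc in E; [|exact E].
    destruct (darboux_zero f df a s Hf') as [m [_ Hm]]; try lra.
    + destruct (Req_dec s a) as [-> | ]; lra.
    + destruct (Hdf m); lra.
Qed.

Lemma is_lim_seq_bounded_increments (u l : nat -> R) :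
  ex_series l -> 0 <= u 0%nat <= l 0%nat -> (forall n, 0 <= u (S n) - u n <= l (S n)) ->
  exists L : R, is_lim_seq u L /\ (forall n, 0 <= u n <= Series l) /\ 0 <= L <= Series l.
Proof.
  intros Hl H0 HS.
  assert (Hlpos : forall n, 0 <= l n) by (intros [|n]; [lra | specialize (HS n); lra]).
  assert (Hpartial : forall n, u n <= sum_n l n).
  { induction n as [|n IH]; [rewrite sum_O; lra|].
    rewrite sum_Sn; change (plus (sum_n l n) (l (S n))) with (sum_n l n + l (S n)).
    specialize (HS n); lra. }
  assert (Hsum : forall n, sum_n l n <= Series l).
  { apply growing_ineq; [|apply is_lim_seq_Reals, Series_correct, Hl].
    intros n; rewrite sum_Sn; change (plus (sum_n l n) (l (S n))) with (sum_n l n + l (S n)).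
    specialize (Hlpos (S n)); lra. }
  assert (Hgrow : Un_growing u) by (intros n; specialize (HS n); lra).
  assert (Hbound : forall n, 0 <= u n <= Series l).
  { intros n; split; [|specialize (Hpartial n); specialize (Hsum n); lra].
    pose proof (growing_prop u n 0 Hgrow ltac:(lia)); lra. }
  destruct (Un_cv_crit u Hgrow) as [L HL].
  { exists (Series l); intros y [n ->]; apply Hbound. }
  apply is_lim_seq_Reals in HL.
  exists L; split; [exact HL | split; [exact Hbound|]].
  split.
  - exact (is_lim_seq_le (fun _ => 0) u 0 L (fun n => proj1 (Hbound n)) (is_lim_seq_const 0) HL).
  - exact (is_lim_seq_le u (fun _ => Series l) L (Series l) (fun n => proj2 (Hbound n)) HL
             (is_lim_seq_const _)).
Qed.

(** * Horocycles tangent to the ray *)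

Lemma arclength_param_orthogonal (x r : R) (gam : R -> pt) (v1 v2 : R -> R) :
  arclength_param x r gam v1 v2 ->
  forall s, (fst (gam s) - x) * v1 s + (snd (gam s) - r) * v2 s = 0.
Proof.
  intros [Hon [_ [_ [D1 [D2 _]]]]] s.
  set (g1 u := fst (gam u)); set (g2 u := snd (gam u)).
  assert (Hd : is_derive (fun u => (g1 u - x) * (g1 u - x) + (g2 u - r) * (g2 u - r)) s
                 (2 * ((g1 s - x) * v1 s + (g2 s - r) * v2 s))).
  { auto_derive.
    - repeat split; eexists; [apply D1 | apply D1 | apply D2 | apply D2].
    - replace (Derive (fun u => g1 u) s) with (v1 s) by (symmetry; apply is_derive_unique, D1).
      replace (Derive (fun u => g2 u) s) with (v2 s) by (symmetry; apply is_derive_unique, D2).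
      ring. }
  assert (Hc : is_derive (fun u => (g1 u - x) * (g1 u - x) + (g2 u - r) * (g2 u - r)) s 0).
  { apply (is_derive_ext (fun _ => r ^ 2)); [|apply (is_derive_const (r ^ 2) s)].
    intros u; destruct (Hon u) as [_ Hu]; unfold g1, g2; rewrite <- Hu; cbn; ring. }
  pose proof (is_derive_unique _ _ _ Hd) as E1; rewrite (is_derive_unique _ _ _ Hc) in E1.
  unfold g1, g2 in E1; lra.
Qed.

Lemma arclength_param_speed (x r : R) (gam : R -> pt) (v1 v2 : R -> R) :
  arclength_param x r gam v1 v2 ->
  forall s, 0 < snd (gam s) /\ v1 s ^ 2 + v2 s ^ 2 = snd (gam s) ^ 2.
Proof.
  intros [Hon [_ [_ [_ [_ Hsp]]]]] s.
  destruct (Hon s) as [Hpos _]; unfold inH in Hpos; split; [exact Hpos|].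
  assert (Hsq : sqrt (v1 s ^ 2 + v2 s ^ 2) = snd (gam s)).
  { specialize (Hsp s). unfold Rdiv in Hsp.
    apply (Rmult_eq_reg_r (/ snd (gam s)));
      [rewrite Rinv_r by lra; exact Hsp | apply Rinv_neq_0_compat; lra]. }
  rewrite <- Hsq, pow2_sqrt; [reflexivity|].
  pose proof (pow2_ge_0 (v1 s)); pose proof (pow2_ge_0 (v2 s)); lra.
Qed.

(* [horo_coord x] is Re (-1 / (z - x)). It maps the horocycle at [x] of radius [x],
   where |z - x|^2 = 2 x Im z, onto the line Im = 1 / (2 x); hence it changes at
   rate +-1 / (2 x) along a hyperbolic arc-length parametrization. *)
Definition horo_coord (x : R) (z : pt) : R := (x - fst z) / (2 * x * snd z).

Definition horo_coord_speed (x : R) (z : pt) (v1 v2 : R) : R :=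
  (- v1 * (2 * x * snd z) - (x - fst z) * (2 * x * v2)) / (2 * x * snd z) ^ 2.

Lemma horo_coord_derive (x : R) (gam : R -> pt) (v1 v2 : R -> R) : 0 < x ->
  arclength_param x x gam v1 v2 ->
  forall s, is_derive (fun u => horo_coord x (gam u)) s (horo_coord_speed x (gam s) (v1 s) (v2 s)).
Proof.
  intros Hx Hgam s.
  destruct (arclength_param_speed _ _ _ _ _ Hgam s) as [Hpos _].
  destruct Hgam as [_ [_ [_ [D1 [D2 _]]]]].
  set (g1 u := fst (gam u)) in *; set (g2 u := snd (gam u)) in *.
  apply (is_derive_ext (fun u => (x - g1 u) / (2 * x * g2 u))); [reflexivity|].
  unfold horo_coord_speed; fold (g1 s) (g2 s).
  assert (2 * x * g2 s <> 0) by (apply Rgt_not_eq, Rmult_lt_0_compat; unfold g2; lra).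
  auto_derive.
  - repeat split; try (eexists; first [apply D1 | apply D2]); assumption.
  - replace (Derive (fun u => g1 u) s) with (v1 s) by (symmetry; apply is_derive_unique, D1).
    replace (Derive (fun u => g2 u) s) with (v2 s) by (symmetry; apply is_derive_unique, D2).
    field. unfold g2; split; lra.
Qed.

Lemma horo_coord_speed_pm (x : R) (gam : R -> pt) (v1 v2 : R -> R) : 0 < x ->
  arclength_param x x gam v1 v2 ->
  forall s, horo_coord_speed x (gam s) (v1 s) (v2 s) = / (2 * x)
         \/ horo_coord_speed x (gam s) (v1 s) (v2 s) = - / (2 * x).
Proof.
  intros Hx Hgam s.
  pose proof (arclength_param_orthogonal _ _ _ _ _ Hgam s) as Horth.
  destruct (arclength_param_speed _ _ _ _ _ Hgam s) as [Hb Hsp].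
  destruct Hgam as [Hon _]; destruct (Hon s) as [_ Hcirc].
  unfold horo_coord_speed.
  set (a := fst (gam s) - x) in *; set (b := snd (gam s)) in *.
  set (p := v1 s) in *; set (q := v2 s) in *.
  set (E := - p * b + a * q).
  replace ((- p * (2 * x * b) - (x - fst (gam s)) * (2 * x * q)) / (2 * x * b) ^ 2)
    with (E / (2 * x * b ^ 2)) by (unfold E, a; field; lra).
  assert (HaE : a * E = x * b * q).
  { transitivity (q * (a ^ 2 + (b - x) ^ 2 - x ^ 2 + b * x) - b * (a * p + (b - x) * q));
      [unfold E; ring | rewrite Horth, Hcirc; ring]. }
  assert (HbE : (b - x) * E = - (x * b * p)).
  { transitivity (- p * (a ^ 2 + (b - x) ^ 2 - x ^ 2 + b * x) + a * (a * p + (b - x) * q));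
      [unfold E; ring | rewrite Horth, Hcirc; ring]. }
  assert (HE2 : E ^ 2 = b ^ 4).
  { apply (Rmult_eq_reg_l (x ^ 2)); [|apply pow_nonzero; lra].
    rewrite <- Hcirc at 1.
    replace ((a ^ 2 + (b - x) ^ 2) * E ^ 2) with ((a * E) ^ 2 + ((b - x) * E) ^ 2) by ring.
    rewrite HaE, HbE. replace (b ^ 4) with (b ^ 2 * (p ^ 2 + q ^ 2)) by (rewrite Hsp; ring). ring. }
  assert (Hprod : (E / (2 * x * b ^ 2) - / (2 * x)) * (E / (2 * x * b ^ 2) + / (2 * x)) = 0).
  { replace ((E / (2 * x * b ^ 2) - / (2 * x)) * (E / (2 * x * b ^ 2) + / (2 * x)))
      with ((E ^ 2 - b ^ 4) / (2 * x * b ^ 2) ^ 2) by (field; lra).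
    rewrite HE2. field. lra. }
  apply Rmult_integral in Hprod; destruct Hprod; [left | right]; lra.
Qed.

Lemma horo_coord_parabolic_at (x l : R) : 0 < x ->
  horo_coord x (mob (parabolic_at x l) (0, x)) - horo_coord x (0, x) = - l / (2 * x).
Proof.
  intros Hx.
  unfold horo_coord, mob; rewrite mdet_parabolic_at by lra.
  unfold parabolic_at; cbn [fst snd ma mb mc md].
  field; split; [lra|].
  apply Rgt_not_eq. pose proof (pow2_ge_0 (l - 1)). nra.
Qed.

Lemma horo_length_translation (p : mat) (x l : R) : 0 < x -> horo_length x x p l ->
  horo_coord x (mob p (0, x)) - horo_coord x (0, x) = l / (2 * x)
  \/ horo_coord x (mob p (0, x)) - horo_coord x (0, x) = - l / (2 * x).
Proof.
  intros Hx [gam [v1 [v2 [Hgam [Hl Hshift]]]]].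
  destruct (proj1 (proj2 Hgam) (0, x)) as [s Hs].
  { split; [unfold inH; cbn; lra | cbn [fst snd]; ring]. }
  rewrite <- Hs, Hshift.
  destruct (increment_of_derivative_pm _ _ (/ (2 * x)) s (s + l)
              (horo_coord_derive x gam v1 v2 Hx Hgam) (horo_coord_speed_pm x gam v1 v2 Hx Hgam))
    as [E | E]; [lra | left | right]; rewrite E; field; lra.
Qed.

Lemma tangent_to_pair_center (x r : R) (p : mat) (t : R) : 0 < x -> tangent_to_pair x r p t ->
  r = x /\ x = exp t.
Proof.
  intros Hx [_ [l [gam [v1 [v2 [s0 [[Hgam _] [Hs0 [Hv1 Hv2]]]]]]]]].
  pose proof (arclength_param_orthogonal _ _ _ _ _ Hgam s0) as Horth.
  destruct (proj1 Hgam s0) as [_ Hcirc].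
  rewrite Hs0, Hv1, Hv2 in *; unfold ray_inf in *; cbn [fst snd] in *.
  pose proof (exp_pos t).
  assert (Hr : r = exp t) by nra.
  subst r. split; [|nra].
  assert (Hfac : (x - exp t) * (x + exp t) = 0) by nra.
  apply Rmult_integral in Hfac; lra.
Qed.

Lemma tangent_translation (p : mat) (x t : R) : 0 < x -> tangent_to_pair x x p t ->
  exists l', 0 <= l' /\ horo_coord x (mob p (0, x)) - horo_coord x (0, x) = - l' / (2 * x).
Proof.
  intros Hx Htan.
  destruct (tangent_to_pair_center x x p t Hx Htan) as [_ Hxt].
  destruct Htan as [_ [l' [gam [v1 [v2 [s0 [[Hgam [Hl' Hshift]] [Hs0 [Hv1 Hv2]]]]]]]]].
  assert (Hs0' : gam s0 = (0, x)) by (rewrite Hs0, Hxt; reflexivity).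
  assert (Hspeed0 : horo_coord_speed x (gam s0) (v1 s0) (v2 s0) = - / (2 * x)).
  { rewrite Hs0', Hv1, Hv2, <- Hxt; unfold horo_coord_speed; cbn [fst snd]; field; lra. }
  exists l'; split; [exact Hl'|].
  rewrite <- Hs0', Hshift.
  rewrite (increment_of_derivative_pm_start _ _ (/ (2 * x)) s0 (s0 + l')
             (horo_coord_derive x gam v1 v2 Hx Hgam) (horo_coord_speed_pm x gam v1 v2 Hx Hgam))
    by (try apply Rinv_0_lt_compat; lra).
  field; lra.
Qed.

(* The tangency fixes the orientation (l' >= 0), while [horo_length] only gives
   the translation up to sign; together they force the normal form with [l]. *)
Lemma tangent_parabolic_normal_form (p : mat) (x r t l : R) :
  parabolic p -> fixes_real p x -> 0 < x ->
  tangent_to_pair x r p t -> horo_length x r p l ->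
  x = exp t /\ 0 <= l /\ (p = parabolic_at x l \/ p = mneg (parabolic_at x l)).
Proof.
  intros Hpar Hfix Hx Htan Hlen.
  destruct (tangent_to_pair_center x r p t Hx Htan) as [-> Hxt].
  assert (Hl : 0 <= l) by (destruct Hlen as [? [? [? [_ [Hl _]]]]]; exact Hl).
  destruct (parabolic_fixing_real p x Hpar Hfix ltac:(lra)) as [m Hm].
  assert (Hmove : horo_coord x (mob p (0, x)) - horo_coord x (0, x) = - m / (2 * x)).
  { destruct Hm as [-> | ->]; rewrite ?mob_mneg; apply horo_coord_parabolic_at, Hx. }
  destruct (tangent_translation p x t Hx Htan) as [l' [Hl' Hmove']].
  assert (Hml : m = l \/ m = - l).
  { destruct (horo_length_translation p x l Hx Hlen) as [E | E]; rewrite Hmove in E;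
      [right | left]; apply (Rmult_eq_reg_r (/ (2 * x))); unfold Rdiv in E;
      try lra; apply Rinv_neq_0_compat; lra. }
  assert (Hm_l : m = l).
  { assert (m = l') by (apply (Rmult_eq_reg_r (/ (2 * x))); unfold Rdiv in *;
                         [lra | apply Rinv_neq_0_compat; lra]).
    lra. }
  subst m. repeat split; assumption.
Qed.

(** * Dynamics on the quarter disk *)

Definition quarter_disk (x : R) (w : pt) : Prop :=
  0 <= fst w /\ fst w ^ 2 + snd w ^ 2 <= x ^ 2 /\ 0 < snd w.

Lemma quarter_disk_mono (x x' : R) (w : pt) : 0 <= x <= x' -> quarter_disk x w -> quarter_disk x' w.
Proof. intros Hx [H1 [H2 H3]]; repeat split; nra. Qed.

Lemma quarter_disk_i (x : R) : 1 <= x -> quarter_disk x i_pt.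
Proof. intros Hx; unfold quarter_disk, i_pt; cbn [fst snd]; repeat split; nra. Qed.

Lemma quarter_disk_parabolic_step (x l : R) (w : pt) : 0 < x -> 0 <= l -> quarter_disk x w ->
  let w' := mob (parabolic_at x (- l)) w in
  quarter_disk x w' /\ snd w' <= snd w <= (1 + l + l ^ 2 / 2) * snd w'.
Proof.
  intros Hx Hl [HX [Hr HY]] w'.
  destruct w as [X Y]; cbn [fst snd] in *.
  set (u := X / x); set (v := Y / x).
  assert (HXu : X = x * u) by (unfold u; field; lra).
  assert (HYv : Y = x * v) by (unfold v; field; lra).
  assert (Hu : 0 <= u) by (unfold u; apply Rdiv_le_0_compat; lra).
  assert (Hv : 0 < v) by (unfold v; apply Rdiv_lt_0_compat; lra).
  assert (Huv : u ^ 2 + v ^ 2 <= 1).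
  { rewrite HXu, HYv in Hr. apply (Rmult_le_reg_l (x ^ 2)); nra. }
  set (h := l / 2).
  set (N := (1 + h - h * u) ^ 2 + (h * v) ^ 2).
  set (P := u + h * (1 - u ^ 2 - v ^ 2) + h ^ 2 * ((1 - u) ^ 2 + v ^ 2)).
  set (K := (1 - u ^ 2 - v ^ 2) + 2 * h * ((1 - u) ^ 2 + v ^ 2)).
  assert (HN1 : 1 <= N).
  { assert (0 <= h * (1 - u)) by (apply Rmult_le_pos; unfold h; nra). unfold N. nra. }
  assert (HN2 : N <= 1 + l + l ^ 2 / 2).
  { assert (0 <= h * u) by (unfold h; nra). assert (h * u <= h) by (unfold h; nra).
    assert (h ^ 2 * v ^ 2 <= h ^ 2) by nra. unfold N, h in *. nra. }
  assert (Hre : fst w' = x * P / N).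
  { unfold w', mob, parabolic_at, P, N, h; cbn [fst snd ma mb mc md].
    rewrite HXu, HYv. field. split; unfold N, h in HN1; lra. }
  assert (Him : snd w' = x * v / N).
  { unfold w', mob, parabolic_at, mdet, N, h; cbn [fst snd ma mb mc md].
    rewrite HXu, HYv. field. split; unfold N, h in HN1; lra. }
  assert (Hnorm : x ^ 2 - (fst w' ^ 2 + snd w' ^ 2) = x ^ 2 * K / N).
  { rewrite Hre, Him. unfold P, K, N. field. unfold N in HN1; lra. }
  assert (HYN : Y = N * snd w') by (rewrite Him, HYv; field; lra).
  assert (0 < snd w') by (rewrite Him; apply Rdiv_lt_0_compat; nra).
  split; [repeat split | rewrite HYN; split; nra].
  - rewrite Hre. apply Rdiv_le_0_compat; [|lra].
    apply Rmult_le_pos; [lra|].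
    assert (0 <= h * (1 - u ^ 2 - v ^ 2)) by (apply Rmult_le_pos; unfold h; lra).
    assert (0 <= h ^ 2 * ((1 - u) ^ 2 + v ^ 2)) by (apply Rmult_le_pos; nra).
    unfold P; lra.
  - assert (0 <= 2 * h * ((1 - u) ^ 2 + v ^ 2)) by (apply Rmult_le_pos; unfold h; nra).
    assert (0 <= x ^ 2 * K / N)
      by (apply Rdiv_le_0_compat; [apply Rmult_le_pos; unfold K; nra | lra]).
    lra.
  - lra.
Qed.

Lemma quarter_disk_parabolic_height (x l : R) (w : pt) : 0 < x -> 0 <= l -> quarter_disk x w ->
  let w' := mob (parabolic_at x (- l)) w in
  quarter_disk x w' /\ 0 <= ln (snd w) - ln (snd w') <= l.
Proof.
  intros Hx Hl Hw w'.
  destruct (quarter_disk_parabolic_step x l w Hx Hl Hw) as [Hw' [Hlo Hhi]].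
  fold w' in Hw', Hlo, Hhi.
  split; [exact Hw'|].
  destruct Hw' as [_ [_ Hpos]].
  assert (Htaylor : 1 + l + l ^ 2 / 2 <= exp l).
  { pose proof (exp_ge_taylor l 2 Hl) as T; cbn in T. lra. }
  assert (Hexp : snd w <= exp l * snd w') by nra.
  assert (0 < snd w) by lra.
  apply ln_le in Hlo; [|lra]. apply ln_le in Hexp; [|lra].
  rewrite ln_mult, ln_exp in Hexp by (try apply exp_pos; lra). lra.
Qed.

Lemma parabolic_orbit_heights (a : nat -> mat) (xs l : nat -> R) :
  (forall n, 1 <= xs n) -> (forall n, xs n <= xs (S n)) -> (forall n, 0 <= l n) ->
  (forall n, a n = parabolic_at (xs n) (l n) \/ a n = mneg (parabolic_at (xs n) (l n))) ->
  let height n := - ln (snd (mob (minv (prod_upto a n)) i_pt)) in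
  0 <= height 0%nat <= l 0%nat /\ forall n, 0 <= height (S n) - height n <= l (S n).
Proof.
  intros Hx1 Hxmono Hl Ha height.
  assert (Hdet : forall n, mdet (a n) = 1).
  { intros n; destruct (Ha n) as [-> | ->]; rewrite ?mdet_mneg;
      apply mdet_parabolic_at; specialize (Hx1 n); lra. }
  assert (Hstep : forall n w, quarter_disk (xs n) w ->
      quarter_disk (xs n) (mob (minv (a n)) w) /\
      0 <= ln (snd w) - ln (snd (mob (minv (a n)) w)) <= l n).
  { intros n w Hw.
    assert (Hact : mob (minv (a n)) w = mob (parabolic_at (xs n) (- l n)) w).
    { destruct (Ha n) as [-> | ->];
        [|change (minv (mneg ?g)) with (mneg (minv g)); rewrite mob_mneg];
        rewrite minv_parabolic_at; reflexivity. }
    rewrite Hact. apply quarter_disk_parabolic_height; auto. specialize (Hx1 n); lra. }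
  set (z n := mob (minv (prod_upto a n)) i_pt).
  assert (Hi : inH i_pt) by (unfold inH, i_pt; cbn; lra).
  assert (Hz : forall n, z (S n) = mob (minv (a (S n))) (z n))
    by (intros n; apply mob_minv_prod_upto; auto).
  assert (Hq : forall n, quarter_disk (xs n) (z n)).
  { intros n; induction n as [|n IH].
    - apply Hstep, quarter_disk_i, Hx1.
    - rewrite Hz. apply Hstep. apply (quarter_disk_mono (xs n)); auto.
      specialize (Hx1 n); specialize (Hxmono n); lra. }
  split.
  - destruct (Hstep 0%nat i_pt (quarter_disk_i _ (Hx1 0%nat))) as [_ Hb].
    replace (ln (snd i_pt)) with 0 in Hb by (symmetry; apply ln_1).
    unfold height; cbn [prod_upto]; lra.
  - intros n. destruct (Hstep (S n) (z n)) as [_ Hb].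
    + apply (quarter_disk_mono (xs n)); auto. specialize (Hx1 n); specialize (Hxmono n); lra.
    + rewrite <- Hz in Hb. unfold height; fold (z n) (z (S n)); lra.
Qed.

Theorem mainTheorem8
  (G : mat -> Prop)
  (p : nat -> mat) (x r t ell : nat -> R)
  (HG : fuchsian G) (HGtf : torsion_free G)
  (Hp : forall n, G (p n) /\ parabolic (p n) /\ fixes_real (p n) (x n))
  (Hr : forall n, 0 < r n)
  (Htan : forall n, tangent_to_pair (x n) (r n) (p n) (t n))
  (Ht0 : forall n, 0 <= t n)
  (Htinc : forall n, t n <= t (S n))
  (Htlim : is_lim_seq t p_infty)
  (Hx0 : forall n, 0 < x n)
  (Hxinc : forall n, x n < x (S n))
  (Hxlim : is_lim_seq x p_infty)
  (Hdisj : forall m n z, m <> n ->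
      in_horoball (x m) (r m) z -> in_horoball (x n) (r n) z -> False)
  (Hell : forall n, horo_length (x n) (r n) (p n) (ell n))
  (Hell0 : is_lim_seq ell 0)
  (k : nat -> nat) (Hk : forall n, (k n < k (S n))%nat)
  (Hsum : ex_series (fun n => ell (k n))) :
  let alpha := fun n => p (k n) in
  let beta := prod_upto alpha in
  let rr := fun n => busemann_inf (mob (minv (beta n)) i_pt) i_pt in
  exists r_alpha : R,
    is_lim_seq rr r_alpha /\
    (forall n, Rabs (rr n) <= Series (fun i => ell (k i))) /\
    Rabs r_alpha <= Series (fun i => ell (k i)).
Proof.
  intros alpha beta rr.
  assert (Hnf : forall n, x (k n) = exp (t (k n)) /\ 0 <= ell (k n) /\
      (alpha n = parabolic_at (x (k n)) (ell (k n)) \/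
       alpha n = mneg (parabolic_at (x (k n)) (ell (k n))))).
  { intros n; destruct (Hp (k n)) as [_ [Hpar Hfix]].
    exact (tangent_parabolic_normal_form _ _ _ _ _ Hpar Hfix (Hx0 (k n)) (Htan (k n))
             (Hell (k n))). }
  assert (Hx1 : forall n, 1 <= x (k n)).
  { intros n; rewrite (proj1 (Hnf n)).
    pose proof (exp_ineq1_le (t (k n))); pose proof (Ht0 (k n)); lra. }
  assert (Hxmono : forall n, x (k n) <= x (k (S n))).
  { intros n; apply Rge_le, growing_prop; [intros m; left; apply Hxinc | specialize (Hk n); lia]. }
  destruct (parabolic_orbit_heights alpha (fun n => x (k n)) (fun n => ell (k n)) Hx1 Hxmono
              (fun n => proj1 (proj2 (Hnf n))) (fun n => proj2 (proj2 (Hnf n)))) as [Hh0 HhS].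
  destruct (is_lim_seq_bounded_increments _ _ Hsum Hh0 HhS) as [L [HL [Hbound HLbound]]].
  assert (Hrr : forall n, rr n = - ln (snd (mob (minv (beta n)) i_pt))).
  { intros n; apply busemann_inf_i, mob_im_pos; [|unfold inH, i_pt; cbn; lra].
    rewrite mdet_minv; apply mdet_prod_upto; intros m; apply (Hp (k m)). }
  exists L; split; [|split].
  - apply (is_lim_seq_ext _ _ L (fun n => eq_sym (Hrr n)) HL).
  - intros n; rewrite Hrr, Rabs_right; [apply Hbound | apply Rle_ge, Hbound].
  - rewrite Rabs_right; lra.
Qed.
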